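(* Let \(\mathcal{I}\) be an instance of 3-SAT and let \(G(\mathcal{I})\) and \(T(\mathcal{I})\) be the graph and spanning tree constructed below. If \(\mathcal{I}\) does not admit a satisfying assignment, then \(T(\mathcal{I})\) is not the \(\mathcal{F}\)-tree of any LBFS ordering of \(G(\mathcal{I})\).
   Context: Let \(\mathcal{I}\) have variables \(x_1,\dots,x_k\) and clauses \(C_1,\dots,C_l\), each a disjunction of three literals. \(G(\mathcal{I})\) has vertices: literal vertices \(X=\{x_1,\dots,x_k,\overline{x_1},\dots,\overline{x_k}\}\); for each clause \(C_i\) three vertices \(a_i,c_i,t_i\); and four vertices \(r,p,q,u\). Edges: any two vertices of \(X\) are adjacent except the pairs \(x_j\overline{x_j}\); each \(\{a_i,c_i,t_i\}\) is a triangle; \(c_i\) is adjacent to the literal vertices of the literals occurring in \(C_i\); \(r\) is adjacent to every vertex except \(u\) and the \(t_i\); \(u\) is adjacent to every vertex except \(r\) and the \(t_i\); \(p\) is adjacent to every vertex of \(X\) and to \(q\); \(q\) is adjacent to every vertex of \(X\) and to every \(a_i\); there are no other edges. \(T(\mathcal{I})\) is the spanning tree consisting of all edges of \(G(\mathcal{I})\) incident to \(r\), the edge \(up\), and the edges \(c_it_i\) for \(i=1,\dots,l\). An LBFS ordering (with \(n\) the number of vertices) is produced by starting with label \((n)\) on a start vertex, empty labels elsewhere, and for \(j=1,\dots,n\) picking an unnumbered vertex of lexicographically largest label as \(v_j\) and appending \(n-j\) to the labels of its unnumbered neighbors (ties arbitrary). The \(\mathcal{F}\)-tree of an ordering \((v_1,\dots,v_n)\)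 has, for each \(v\ne v_1\), an edge from \(v\) to its leftmost neighbor in the ordering. *)

From HB Require Import structures.
From mathcomp Require Import all_boot.
Set Implicit Arguments. Unset Strict Implicit. Unset Printing Implicit Defensive.

(* A literal over variables x_0..x_{k-1}: (j, true) is x_j, (j, false) is ~x_j. *)
Definition literal (k : nat) := ('I_k * bool)%type.

Definition instance (k l : nat) := 'I_l -> 'I_3 -> literal k.

Definition lit_true k (a : 'I_k -> bool) (L : literal k) : bool := a L.1 == L.2.

Definition satisfiable k l (cl : instance k l) : Prop :=
  exists a : 'I_k -> bool, forall i : 'I_l, exists j : 'I_3, lit_true a (cl i j).

Inductive vtx (k l : nat) :=
| VLit of 'I_k & bool   (* literal vertices X: VLit j true = x_j, VLit j false = ~x_j *)
| VA of 'I_l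
| VC of 'I_l
| VT of 'I_l
| VR | VP | VQ | VU.
Arguments VLit {k l}. Arguments VA {k l}. Arguments VC {k l}. Arguments VT {k l}.
Arguments VR {k l}. Arguments VP {k l}. Arguments VQ {k l}. Arguments VU {k l}.

Section VtxFin.
Variables k l : nat.
Definition vtx_enc (v : vtx k l) : (('I_k * bool) + ('I_l * 'I_3 + 'I_4))%type :=
  match v with
  | VLit j b => inl (j, b)
  | VA i => inr (inl (i, @Ordinal 3 0 isT))
  | VC i => inr (inl (i, @Ordinal 3 1 isT))
  | VT i => inr (inl (i, @Ordinal 3 2 isT))
  | VR => inr (inr (@Ordinal 4 0 isT))
  | VP => inr (inr (@Ordinal 4 1 isT))
  | VQ => inr (inr (@Ordinal 4 2 isT))
  | VU => inr (inr (@Ordinal 4 3 isT))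
  end.
Definition vtx_dec (c : (('I_k * bool) + ('I_l * 'I_3 + 'I_4))%type) : option (vtx k l) :=
  match c with
  | inl (j, b) => Some (VLit j b)
  | inr (inl (i, t)) =>
      match val t with 0 => Some (VA i) | 1 => Some (VC i) | _ => Some (VT i) end
  | inr (inr t) =>
      match val t with 0 => Some VR | 1 => Some VP | 2 => Some VQ | _ => Some VU end
  end.
Lemma vtx_encK : pcancel vtx_enc vtx_dec. Proof. by case. Qed.
End VtxFin.
HB.instance Definition _ (k l : nat) :=
  Finite.copy (vtx k l) (pcan_type (@vtx_encK k l)).

Section Graph.
Variables (k l : nat) (cl : instance k l).

Definition occurs (i : 'I_l) (L : literal k) : bool := [exists j : 'I_3, cl i j == L].

Definition G_base (v w : vtx k l) : bool :=
  match v, w with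
  | VLit j _, VLit j' _ => j != j'                 (* X is complete minus x_j ~x_j *)
  | VA i, VC i' | VC i, VT i' | VA i, VT i' => i == i'  (* triangles a_i c_i t_i *)
  | VC i, VLit j b => occurs i (j, b)
  | VR, VU | VR, VT _ => false
  | VR, _ => true                                   (* r ~ all but u, t_i *)
  | VU, VR | VU, VT _ => false
  | VU, _ => true                                   (* u ~ all but r, t_i *)
  | VP, VLit _ _ | VP, VQ => true
  | VQ, VLit _ _ | VQ, VA _ => true
  | _, _ => false
  end.

Definition G_adj (v w : vtx k l) : bool := (v != w) && (G_base v w || G_base w v).

Definition T_base (v w : vtx k l) : bool :=
  match v, w with
  | VR, _ => G_adj VR w
  | VU, VP => true
  | VC i, VT i' => i == i'
  | _, _ => false
  end.
Definition T_edge (v w : vtx k l) : bool := T_base v w || T_base w v.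
End Graph.

Section LBFS.
Variables (V : finType) (adj : rel V).

Fixpoint lexle (s t : seq nat) : bool :=
  match s, t with
  | [::], _ => true
  | _ :: _, [::] => false
  | x :: s', y :: t' => (x < y) || ((x == y) && lexle s' t')
  end.

(* The label of vertex w just before the (j+1)-th vertex is chosen (0-based j),
   in the LBFS run with start vertex st that numbers vertices in the order s:
   the start vertex initially carries (n), and when v_{i+1} = nth st s i is
   numbered (at step i+1), n - (i+1) is appended to the labels of its
   neighbours.  (Appending to already-numbered vertices is harmless, since
   only labels of unnumbered vertices are compared.) *)
Definition lbfs_label (st : V) (s : seq V) (j : nat) (w : V) : seq nat :=
  (if w == st then [:: #|V|] else [::]) ++
  [seq #|V| - i.+1 | i <- iota 0 j & adj (nth st s i) w].

Definition is_LBFS (s : seq V) : Prop :=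
  perm_eq s (enum V) /\
  exists st : V, forall j, j < #|V| ->
    forall w : V, w \notin take j s ->
      lexle (lbfs_label st s j w) (lbfs_label st s j (nth st s j)).

Definition leftmost_nbr (s : seq V) (v w : V) : bool :=
  (index v s != 0) && adj v w &&
  [forall z, adj v z ==> (index w s <= index z s)].

Definition Ftree_edge (s : seq V) (v w : V) : bool :=
  leftmost_nbr s v w || leftmost_nbr s w v.
End LBFS.

From HB Require Import structures.
From mathcomp Require Import all_boot.
From mathcomp Require Import zify.

Set Implicit Arguments. Unset Strict Implicit. Unset Printing Implicit Defensive.

(* Every vertex
   other than r has a neighbour that is a leaf of T(I) hanging from r, so r is
   numbered first; the T(I)-parent of u is p, so p comes second; the
   T(I)-parent of t_i is c_i, so c_i precedes a_i.  Since the first vertex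
   separating two vertices is adjacent to the earlier one, p puts q before
   every c_i; x_j and ~x_j cannot both precede q (the earlier would separate q
   from the later); and each clause C_i has a literal before q (otherwise q
   would separate a_i from c_i and a_i would beat c_i).  Hence "x_j precedes
   q" is a satisfying assignment. *)

Lemma lexle_cat u s t : lexle (u ++ s) (u ++ t) = lexle s t.
Proof. by elim: u => //= x u ->; rewrite ltnn eqxx. Qed.

Lemma lexle_cons_gt x s t : all (fun y => y < x) t -> lexle (x :: s) t = false.
Proof. by case: t => //= y t /andP [yx _]; rewrite ltnNge (ltnW yx) gtn_eqF. Qed.

Definition lbfs_from (V : finType) (adj : rel V) (st : V) (s : seq V) : Prop :=
  forall j, j < #|V| -> forall w, w \notin take j s ->
    lexle (lbfs_label adj st s j w) (lbfs_label adj st s j (nth st s j)).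

Section Enumeration.
Variables (V : finType) (s : seq V).
Hypothesis s_perm : perm_eq s (enum V).

Lemma perm_enum_mem v : v \in s.
Proof. by rewrite (perm_mem s_perm) mem_enum. Qed.

Lemma perm_enum_uniq : uniq s.
Proof. by rewrite (perm_uniq s_perm) enum_uniq. Qed.

Lemma perm_enum_size : size s = #|V|.
Proof. by rewrite (perm_size s_perm) -cardE. Qed.

Lemma index_perm_enum_lt v : index v s < #|V|.
Proof. by rewrite -perm_enum_size index_mem perm_enum_mem. Qed.

Lemma eq_index_perm_enum v w : (index v s == index w s) = (v == w).
Proof. by apply/eqP/eqP => [|-> //]; apply: (index_inj v); apply: perm_enum_mem. Qed.

Lemma index_nth_perm_enum x0 j : j < #|V| -> index (nth x0 s j) s = j.
Proof. by rewrite -perm_enum_size => /index_uniq; apply; apply: perm_enum_uniq. Qed.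

End Enumeration.

Section LBFSOrdering.
Variables (V : finType) (adj : rel V) (st : V) (s : seq V).
Hypothesis s_perm : perm_eq s (enum V).
Hypothesis s_lbfs : lbfs_from adj st s.

Lemma index_lbfs_start : index st s = 0.
Proof.
have V_gt0 : 0 < #|V| by apply/card_gt0P; exists st.
have := s_lbfs V_gt0 (w := st); rewrite take0 /lbfs_label eqxx /=.
by case: eqP => [<- _|_ /(_ isT) //]; rewrite (index_nth_perm_enum s_perm).
Qed.

(* The classical LBFS property: the leftmost vertex z distinguishing v from a
   later vertex w is adjacent to v, otherwise w would have beaten v. *)
Lemma lbfs_first_separator v w z :
  index v s < index w s -> index z s < index v s ->
  (forall y, index y s < index z s -> adj y v = adj y w) ->
  adj z w -> adj z v.
Proof.
move=> vw zv agree zw; apply/negPn/negP => /negbTE zv_false.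
have vV := index_perm_enum_lt s_perm v.
have w_late : w \notin take (index v s) s.
  by rewrite in_take ?(perm_enum_mem s_perm) // -leqNgt ltnW.
have not_st x : index z s < index x s -> (x == st) = false.
  by apply: contraTF => /eqP ->; rewrite index_lbfs_start.
have := s_lbfs vV w_late; rewrite nth_index ?(perm_enum_mem s_perm) //.
rewrite /lbfs_label !not_st //; last exact: ltn_trans vw.
set j := index v s in zv vV *; set m := index z s in zv agree *.
have -> : j = m + (j - m).-1.+1 by lia.
rewrite iotaD /= !filter_cat !map_cat.
have -> : [seq i <- iota 0 m | adj (nth st s i) w] =
          [seq i <- iota 0 m | adj (nth st s i) v].
  apply: eq_in_filter => i; rewrite mem_iota => /andP [_ im].
  by rewrite agree // (index_nth_perm_enum s_perm) //; lia.
rewrite lexle_cat add0n [X in lexle X _]/= [Y in lexle _ Y]/=.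
rewrite nth_index ?(perm_enum_mem s_perm) // zw zv_false lexle_cons_gt //.
apply/allP => _ /mapP [i + ->]; rewrite mem_filter mem_iota => /andP [_ /andP [mi _]].
by apply: ltn_sub2l => //; apply: leq_ltn_trans zv vV.
Qed.

End LBFSOrdering.

Lemma Ftree_unique_nbr_le (V : finType) (adj T : rel V) (s : seq V) x y z :
  (forall v w, T v w = Ftree_edge adj s v w) ->
  index x s != 0 -> (forall y', T x y' -> y' = y) -> adj x z ->
  index y s <= index z s.
Proof.
move=> T_Ftree x_not_first T_x xz.
have [y' y'_adj y'_min] := arg_minnP (fun y' => index y' s) xz.
have y'_left : leftmost_nbr adj s x y'.
  by rewrite /leftmost_nbr x_not_first y'_adj; apply/forallP => u; apply/implyP/y'_min.
have -> : y = y' by rewrite -(T_x y') // T_Ftree /Ftree_edge y'_left.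
exact: y'_min.
Qed.

Definition lit_vtx {k l} (L : literal k) : vtx k l := VLit L.1 L.2.

Section Construction.
Variables (k l : nat) (cl : instance k l).

Definition vtx_eqb (v w : vtx k l) : bool :=
  match v, w with
  | VLit j b, VLit j' b' => (j == j') && (b == b')
  | VA i, VA i' | VC i, VC i' | VT i, VT i' => i == i'
  | VR, VR | VP, VP | VQ, VQ | VU, VU => true
  | _, _ => false
  end.

Lemma vtx_eqE v w : (v == w) = vtx_eqb v w.
Proof.
apply/eqP/idP => [<-|]; first by case: v => //= *; rewrite !eqxx.
by case: v => [j b|i|i|i||||]; case: w => [j' b'|i'|i'|i'||||] //=;
  [case/andP => /eqP -> /eqP ->|move/eqP ->..].
Qed.

Notation G := (G_adj cl).

(* the T(I)-neighbour of a leaf of T(I); r, p and the c_i are the inner vertices *)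
Definition leaf_parent (v : vtx k l) : option (vtx k l) :=
  match v with
  | VLit _ _ | VA _ | VQ => Some VR
  | VT i => Some (VC i)
  | VU => Some VP
  | _ => None
  end.

Lemma T_edge_leaf_parent v y w : leaf_parent v = Some y -> T_edge cl v w -> w = y.
Proof. by case: v => [j b|i|i|i||||] //= [<-]; case: w => //= i' /eqP ->. Qed.

Lemma exists_VR_leaf_nbr (i0 : 'I_l) v :
  v != VR -> exists2 x, leaf_parent x = Some VR & G x v.
Proof.
case: v => [j b|i|i|i||||] // _.
- by exists VQ.
- by exists VQ.
- exists (lit_vtx (cl i ord0)) => //.
  by rewrite /G_adj vtx_eqE /= -surjective_pairing; apply/existsP; exists ord0.
- by exists (VA i); rewrite // /G_adj vtx_eqE /= eqxx.
- by exists VQ.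
- by exists (VA i0).
- by exists VQ.
Qed.

Lemma G_VR_VU v : G VR v -> G VU v.
Proof. by case: v. Qed.

Definition late (v : vtx k l) : bool :=
  match v with VA _ | VC _ | VQ => true | _ => false end.

Lemma G_VQ_VLit z j b :
  ~~ late z -> (forall b', z != VLit j b') -> G z VQ = G z (VLit j b).
Proof.
case: z => [j' b'|i|i|i||||] //= _; rewrite /G_adj !vtx_eqE //=.
by case: eqVneq => [-> /(_ b')|]; rewrite ?eqxx.
Qed.

Lemma G_VA_VC z i : ~~ late z -> ~~ [exists j, z == lit_vtx (cl i j)] ->
  G z (VA i) = G z (VC i).
Proof.
case: z => [j b|i'|i'|i'||||] //= _; rewrite /G_adj !vtx_eqE //=.
move=> no_lit; apply/esym/negbTE; apply: contra no_lit => /existsP [j' /eqP Lj].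
by apply/existsP; exists j'; rewrite /lit_vtx Lj.
Qed.

End Construction.

Section Reduction.
Variables (k l : nat) (cl : instance k l) (st : vtx k l) (s : seq (vtx k l)).
Hypothesis l_gt0 : 0 < l.
Hypothesis s_perm : perm_eq s (enum {: vtx k l}).
Hypothesis s_lbfs : lbfs_from (G_adj cl) st s.
Hypothesis T_Ftree : forall v w, T_edge cl v w = Ftree_edge (G_adj cl) s v w.

Notation G := (G_adj cl).
Let separator := lbfs_first_separator s_perm s_lbfs.
Let eq_index := eq_index_perm_enum s_perm.

Lemma leaf_parent_le v y z :
  leaf_parent v = Some y -> index v s != 0 -> G v z -> index y s <= index z s.
Proof.
move=> v_leaf v_nf; apply: (Ftree_unique_nbr_le T_Ftree v_nf) => y'.
exact: T_edge_leaf_parent.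
Qed.

Lemma index_VR : index VR s = 0.
Proof.
apply/eqP/negPn/negP => r_nf.
have card_gt0 : 0 < #|{: vtx k l}| by apply/card_gt0P; exists VR.
set v1 := nth VR s 0.
have v1_first : index v1 s = 0 := index_nth_perm_enum s_perm VR card_gt0.
have v1_r : v1 != VR by rewrite -eq_index // v1_first eq_sym.
have [x x_leaf xv1] := exists_VR_leaf_nbr cl (Ordinal l_gt0) v1_r.
have x_nf : index x s != 0.
  rewrite -v1_first eq_index.
  by apply: contraTneq xv1 => ->; rewrite /G_adj eqxx.
by have := leaf_parent_le x_leaf x_nf xv1; rewrite v1_first leqn0 (negbTE r_nf).
Qed.

Lemma index_VP : index VP s = 1.
Proof.
have p_nf : index VP s != 0 by rewrite -index_VR eq_index.
suff : index VP s <= 1 by lia.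
rewrite leqNgt; apply/negP => p_late.
have card_gt1 : 1 < #|{: vtx k l}| := ltn_trans p_late (index_perm_enum_lt s_perm VP).
set v2 := nth VR s 1.
have v2_second : index v2 s = 1 := index_nth_perm_enum s_perm VR card_gt1.
have u_nf : index VU s != 0 by rewrite -index_VR eq_index.
have not_uv2 : ~~ G VU v2.
  apply: contraTN p_late => uv2; rewrite -leqNgt -v2_second.
  exact: leaf_parent_le u_nf uv2.
have rv2 : G VR v2.
  by apply: (separator (w := VP)); rewrite ?v2_second ?index_VR.
by rewrite (G_VR_VU rv2) in not_uv2.
Qed.

Lemma VC_before_VA i : index (VC i) s < index (VA i) s.
Proof.
have t_nf : index (VT i) s != 0 by rewrite -index_VR eq_index.
have ta : G (VT i) (VA i) by rewrite /G_adj vtx_eqE /= eqxx.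
have := @leaf_parent_le (VT i) (VC i) _ erefl t_nf ta.
by rewrite leq_eqVlt eq_index vtx_eqE.
Qed.

Lemma VQ_before_VC i : index VQ s < index (VC i) s.
Proof.
rewrite ltnNge leq_eqVlt eq_index vtx_eqE /=; apply/negP => c_q.
have c_late : index VP s < index (VC i) s.
  rewrite index_VP; have : index (VC i) s \notin [:: 0; 1].
    by rewrite !inE -index_VP -index_VR !eq_index !vtx_eqE.
  by rewrite !inE; lia.
have r_only y : index y s < index VP s -> y = VR.
  by rewrite index_VP ltnS leqn0 -index_VR eq_index => /eqP.
have : G VP (VC i).
  apply: (separator c_q c_late) => [y /r_only ->|]; last by [].
  by rewrite /G_adj !vtx_eqE.
by rewrite /G_adj vtx_eqE.
Qed.

Lemma late_after_VQ v : late v -> index VQ s <= index v s.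
Proof.
case: v => //= [i|i] _; last exact: ltnW (VQ_before_VC i).
exact: ltnW (ltn_trans (VQ_before_VC i) (VC_before_VA i)).
Qed.

Lemma later_lit_after_VQ j b :
  index (VLit j b) s < index (VLit j (~~ b)) s ->
  index VQ s <= index (VLit j (~~ b)) s.
Proof.
move=> lits; rewrite leqNgt; apply/negP => lit_q.
have : G (VLit j b) (VLit j (~~ b)).
  apply: (separator lit_q lits) => [y y_early|]; last by rewrite /G_adj vtx_eqE.
  apply/esym/G_VQ_VLit.
    apply: contraTN y_early => /late_after_VQ q_y; rewrite -leqNgt.
    exact: leq_trans (ltnW (ltn_trans lits lit_q)) q_y.
  move=> b'; apply: contraTneq y_early => ->.
  have : (b' == b) || (b' == ~~ b) by case: b b' {lits lit_q} => [] [].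
  by case/orP => /eqP ->; rewrite -leqNgt // ltnW.
by rewrite /G_adj /= eqxx andbF.
Qed.

Lemma neg_lit_after_VQ j :
  index (VLit j true) s < index VQ s -> index VQ s <= index (VLit j false) s.
Proof.
move=> t_q; case: (ltngtP (index (VLit j true) s) (index (VLit j false) s)).
- exact: (@later_lit_after_VQ j true).
- by move/(@later_lit_after_VQ j false); rewrite leqNgt t_q.
- by move/eqP; rewrite eq_index vtx_eqE /= andbF.
Qed.

Lemma clause_lit_before_VQ i : exists j, index (lit_vtx (cl i j)) s < index VQ s.
Proof.
apply/existsP; apply: contraT => no_lit.
have : G VQ (VC i).
  apply: (separator (VC_before_VA i) (VQ_before_VC i)) => [y y_early|]; last first.
    by rewrite /G_adj vtx_eqE.
  rewrite G_VA_VC //.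
    by apply: contraTN y_early => /late_after_VQ; rewrite -leqNgt.
  apply: contra no_lit => /existsP [j /eqP y_lit].
  by apply/existsP; exists j; rewrite -y_lit.
by rewrite /G_adj vtx_eqE.
Qed.

Lemma lbfs_Ftree_satisfiable : satisfiable cl.
Proof.
exists (fun j => index (VLit j true) s < index VQ s) => i.
have [j lit_q] := clause_lit_before_VQ i; exists j; move: lit_q.
rewrite /lit_true /lit_vtx; case: (cl i j) => j' [] /= lit_q.
- by rewrite lit_q.
- by rewrite eqbF_neg; apply: contraL lit_q => /neg_lit_after_VQ; rewrite -leqNgt.
Qed.

End Reduction.

Theorem lemma7 (k l : nat) (cl : instance k l) :
  ~ satisfiable cl ->
  forall s : seq (vtx k l),
    is_LBFS (G_adj cl) s ->
    ~ (forall v w : vtx k l, T_edge cl v w = Ftree_edge (G_adj cl) s v w).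
Proof.
move=> unsat s [s_perm [st s_lbfs]] T_Ftree; apply: unsat.
have [l0|l_gt0] := posnP l.
  by exists (fun=> true) => i; have := ltn_ord i; rewrite {2}l0.
exact: lbfs_Ftree_satisfiable l_gt0 s_perm s_lbfs T_Ftree.
Qed.
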